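(* For every positive integer $n$, $$\operatorname{adim}(P_3\square P_n)\leq\begin{cases} n+1 & \text{if } n\equiv 1 \pmod 3,\\ n & \text{otherwise.}\end{cases}$$
   Context: $P_n$ is the path on $n$ vertices and $\square$ is the Cartesian product of graphs. For a graph $G$, $d(u,v)$ is the shortest-path distance and $d_1(u,v)=\min(d(u,v),2)$. A set $A\subseteq V(G)$ is an adjacency resolving set if for all distinct $x,y\in V(G)$ there is $z\in A$ with $d_1(z,x)\neq d_1(z,y)$; $\operatorname{adim}(G)$ is the minimum cardinality of an adjacency resolving set. *)

From mathcomp Require Import all_boot all_order.
Set Implicit Arguments. Unset Strict Implicit. Unset Printing Implicit Defensive.

(* d_1(u,v) = min(d(u,v), 2), where d is the shortest-path distance
   (d = infinity for different components).  Since d(u,v)=0 iff u=v and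
   d(u,v)=1 iff u,v adjacent (u <> v), min(d,2) unfolds to: *)
Definition dist1 (T : finType) (e : rel T) (u v : T) : nat :=
  if u == v then 0 else if e u v then 1 else 2.

Definition adj_resolving (T : finType) (e : rel T) (A : {set T}) : bool :=
  [forall x : T, forall y : T, (x != y) ==>
     [exists z in A, dist1 e z x != dist1 e z y]].

Lemma adj_resolving_exists (T : finType) (e : rel T) :
  exists k, [exists A : {set T}, adj_resolving e A && (#|A| == k)].
Proof.
exists #|[set: T]|; apply/existsP; exists [set: T]; rewrite eqxx andbT.
apply/forallP => x; apply/forallP => y; apply/implyP => nxy.
apply/existsP; exists x; rewrite in_setT /= /dist1 eqxx (negbTE nxy).
by case: (e x y).
Qed.

Definition adim (T : finType) (e : rel T) : nat := ex_minn (adj_resolving_exists e).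

Definition path_rel (n : nat) : rel 'I_n :=
  fun i j => (i.+1 == j :> nat) || (j.+1 == i :> nat).

Definition cart_rel (T1 T2 : finType) (e1 : rel T1) (e2 : rel T2) : rel (T1 * T2) :=
  fun x y => ((x.1 == y.1) && e2 x.2 y.2) || ((x.2 == y.2) && e1 x.1 y.1).
Arguments path_rel : clear implicits.

From mathcomp Require Import all_boot all_order zify.
Set Implicit Arguments. Unset Strict Implicit.

(* Write the vertices of P_3 □ P_n as pairs (row, column).  The resolver S
   takes, in every block of columns 3t, 3t+1, 3t+2, the rows 0 and 2 of
   column 3t+1 and row 1 of column 3t+2, plus rows 0 and 2 of the last column
   when n = 1 (mod 3); so |S| is n, or n+1 in that case.  Since d_1 only
   distinguishes equal, adjacent and other vertices, S is adjacency resolving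
   as soon as distinct vertices outside S have distinct neighbourhoods in S.
   Every vertex u outside S other than (1,0) has one or two "keys", neighbours
   of u in S, and a rank in {0,1,2} (0 for row 1 of a column with two vertices
   of S, 1 for columns 3t+2, 2 for columns 3t) such that u is the only vertex
   outside S of rank at least rank u adjacent to all keys of u.  Hence of two
   distinct vertices outside S, the one of smaller rank has a key that is not
   adjacent to the other.  The corner (1,0) has no neighbour in S unless n = 1. *)

Lemma adim_le (T : finType) (e : rel T) (A : {set T}) :
  adj_resolving e A -> adim e <= #|A|.
Proof.
by move=> resA; rewrite /adim; case: ex_minnP => m _; apply; apply/existsP; exists A;
  rewrite resA eqxx.
Qed.

Section Dist1.

Variables (T : finType) (e : rel T).

Lemma dist1_eq0 u v : (dist1 e u v == 0) = (u == v).
Proof. by rewrite /dist1; case: (u == v) => //; case: (e u v). Qed.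

Lemma dist1_neq u v : u != v -> dist1 e u v = if e u v then 1 else 2.
Proof. by rewrite /dist1 => /negbTE ->. Qed.

Lemma adj_resolving_of_separating (A : {set T}) :
  (forall x y, x \notin A -> y \notin A -> x != y ->
     exists2 z, z \in A & e z x != e z y) ->
  adj_resolving e A.
Proof.
move=> sepA; apply/forallP => x; apply/forallP => y; apply/implyP => neq_xy.
have dist1_self u : dist1 e u u = 0 by apply/eqP; rewrite dist1_eq0.
have [xA|xNA] := boolP (x \in A).
  by apply/existsP; exists x; rewrite xA dist1_self eq_sym dist1_eq0.
have [yA|yNA] := boolP (y \in A).
  by apply/existsP; exists y; rewrite yA dist1_self dist1_eq0 eq_sym.
have [z zA ezxy] := sepA x y xNA yNA neq_xy.
have neq_zx : z != x by apply: contraNneq xNA => <-.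
have neq_zy : z != y by apply: contraNneq yNA => <-.
apply/existsP; exists z; rewrite zA !dist1_neq //.
by move: ezxy; case: (e z x); case: (e z y).
Qed.

End Dist1.

Lemma leq_card_in_bounded (T : finType) (A : {pred T}) (f : T -> nat) m :
  {in A &, injective f} -> {in A, forall x, f x < m} -> #|A| <= m.
Proof.
move=> f_inj f_lt; rewrite cardE -(size_map f) -(size_iota 0 m).
apply: uniq_leq_size.
  by rewrite map_inj_in_uniq ?enum_uniq // => x y; rewrite !mem_enum; exact: f_inj.
by move=> _ /mapP [x xA ->]; rewrite mem_iota f_lt // -mem_enum.
Qed.

Lemma mod3_cases (P : nat -> Prop) :
  (forall q, P (q * 3)) -> (forall q, P (q * 3 + 1)) -> (forall q, P (q * 3 + 2)) ->
  forall i, P i.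
Proof.
move=> P0 P1 P2 i; rewrite (divn_eq i 3).
by case: (i %% 3) (ltn_mod i 3) => [|[|[|//]]] _; rewrite ?addn0.
Qed.

Definition grid_adj (u v : nat * nat) : bool :=
  ((u.1 == v.1) && ((u.2.+1 == v.2) || (v.2.+1 == u.2))) ||
  ((u.2 == v.2) && ((u.1.+1 == v.1) || (v.1.+1 == u.1))).

Definition last_col (n i : nat) : bool := (n %% 3 == 1) && (i == n.-1).

Definition in_resolver (n : nat) (u : nat * nat) : bool :=
  (u.1 < 3) && (u.2 < n) &&
  [|| (u.2 %% 3 == 1) && (u.1 != 1), (u.2 %% 3 == 2) && (u.1 == 1)
    | last_col n u.2 && (u.1 != 1)].

Definition key_rank (n : nat) (u : nat * nat) : nat :=
  if (u.2 %% 3 == 1) || last_col n u.2 then 0 else if u.2 %% 3 == 2 then 1 else 2.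

(* A vertex with a single key gets it twice; the keys of (1,0) are junk. *)
Definition keys (n : nat) (u : nat * nat) : (nat * nat) * (nat * nat) :=
  let: (a, i) := u in
  match key_rank n u with
  | 0 => ((0, i), (2, i))
  | 1 => ((1, i), (a, i.-1))
  | _ => if a == 1 then ((1, i.-1), (1, i.-1)) else ((a, i.+1), (a, i.+1))
  end.

Section Keys.

Variable n : nat.

Lemma keys_adj u : u.1 < 3 -> u.2 < n -> ~~ in_resolver n u -> u != (1, 0) ->
  [&& in_resolver n (keys n u).1, grid_adj (keys n u).1 u,
      in_resolver n (keys n u).2 & grid_adj (keys n u).2 u].
Proof.
case: u => a i /=; rewrite /in_resolver /grid_adj /keys /key_rank /last_col /= xpair_eqE.
elim/mod3_cases: i => q; elim/mod3_cases: n => m; rewrite ?modnMDl ?modnMl /=;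
  repeat case: ifP => ? /=; lia.
Qed.

Lemma keys_common_neighbor u v : u.1 < 3 -> u.2 < n -> v.1 < 3 -> v.2 < n ->
  ~~ in_resolver n u -> ~~ in_resolver n v -> u != (1, 0) ->
  key_rank n u <= key_rank n v ->
  grid_adj (keys n u).1 v -> grid_adj (keys n u).2 v -> u = v.
Proof.
case: u v => a i [b j] /= ha hi hb hj uNS vNS u_corner le_rank k1v k2v.
apply/eqP; rewrite xpair_eqE; move: ha hi hb hj uNS vNS u_corner le_rank k1v k2v.
rewrite /in_resolver /grid_adj /keys /key_rank /last_col /= !xpair_eqE.
elim/mod3_cases: i => q; elim/mod3_cases: j => p; elim/mod3_cases: n => m;
  rewrite ?modnMDl ?modnMl /=; repeat case: ifP => ? /=; lia.
Qed.

Lemma resolver_nbr_corner z u : in_resolver n z -> grid_adj z (1, 0) ->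
  u.1 < 3 -> u.2 < n -> ~~ in_resolver n u -> u = (1, 0).
Proof.
case: z u => c k [a i]; rewrite /in_resolver /grid_adj /last_col /= => + + + + /negP.
by elim/mod3_cases: n => m; rewrite ?modnMDl ?modnMl => *; apply/eqP; rewrite xpair_eqE; lia.
Qed.

Lemma resolver_separates u v : u.1 < 3 -> u.2 < n -> v.1 < 3 -> v.2 < n ->
  ~~ in_resolver n u -> ~~ in_resolver n v -> u != v ->
  exists2 z, in_resolver n z & grid_adj z u != grid_adj z v.
Proof.
wlog: u v / (u != (1, 0)) && ((v == (1, 0)) || (key_rank n u <= key_rank n v)).
  move=> sep hu1 hu2 hv1 hv2 uNS vNS neq_uv.
  have sep_sym : (v != (1, 0)) && ((u == (1, 0)) || (key_rank n v <= key_rank n u)) ->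
      exists2 z, in_resolver n z & grid_adj z u != grid_adj z v.
    move=> cond; have neq_vu : v != u by rewrite eq_sym.
    have [z zS sep_z] := sep v u cond hv1 hv2 hu1 hu2 vNS uNS neq_vu.
    by exists z; rewrite // eq_sym.
  have [u_corner | u_ncorner] := eqVneq u (1, 0).
    by apply: sep_sym; rewrite u_corner eqxx andbT -u_corner eq_sym.
  have [le_uv | lt_vu] := leqP (key_rank n u) (key_rank n v).
    by apply: sep; rewrite // u_ncorner le_uv orbT.
  have [v_corner | v_ncorner] := eqVneq v (1, 0).
    by apply: sep; rewrite // u_ncorner v_corner eqxx.
  by apply: sep_sym; rewrite v_ncorner (ltnW lt_vu) orbT.
move=> /andP [u_corner v_corner_or_rank] hu1 hu2 hv1 hv2 uNS vNS neq_uv.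
have /and4P [k1S k1u k2S k2u] := keys_adj hu1 hu2 uNS u_corner.
have [k1v | ] := boolP (grid_adj (keys n u).1 v); last first.
  by exists (keys n u).1; rewrite // k1u.
have [k2v | ] := boolP (grid_adj (keys n u).2 v); last first.
  by exists (keys n u).2; rewrite // k2u.
case/orP: v_corner_or_rank => [/eqP v_corner | le_uv].
  rewrite v_corner in k1v.
  by rewrite (resolver_nbr_corner k1S k1v hu1 hu2 uNS) eqxx in u_corner.
by rewrite (keys_common_neighbor hu1 hu2 hv1 hv2 uNS vNS u_corner le_uv k1v k2v) eqxx in neq_uv.
Qed.

(* Column 3t+1 of the resolver is labelled 3t and 3t+1, column 3t+2 is
   labelled 3t+2, and the extra last column is labelled n-1 and n. *)
Definition resolver_label (u : nat * nat) : nat :=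
  if u.2 %% 3 == 1 then u.2.-1 + u.1 %/ 2 else if u.2 %% 3 == 2 then u.2 else u.2 + u.1 %/ 2.

Lemma resolver_label_inj : {in in_resolver n &, injective resolver_label}.
Proof.
case=> [a i] [b j]; rewrite !unfold_in /in_resolver /resolver_label /last_col /=.
elim/mod3_cases: i => q; elim/mod3_cases: j => p; elim/mod3_cases: n => m;
  rewrite ?modnMDl ?modnMl /= => *; apply/eqP; rewrite xpair_eqE; lia.
Qed.

Lemma resolver_label_lt u :
  in_resolver n u -> resolver_label u < (if n %% 3 == 1 then n.+1 else n).
Proof.
case: u => a i; rewrite /in_resolver /resolver_label /last_col /=.
by elim/mod3_cases: i => q; elim/mod3_cases: n => m; rewrite ?modnMDl ?modnMl /=; lia.
Qed.

End Keys.

Section Grid.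

Variable n : nat.

Definition coord (x : 'I_3 * 'I_n) : nat * nat := (x.1 : nat, x.2 : nat).

Lemma coord_inj : injective coord.
Proof. by case=> [a i] [b j] [/val_inj-> /val_inj->]. Qed.

Lemma coordP u : u.1 < 3 -> u.2 < n -> exists x, coord x = u.
Proof. by case: u => a i /= lt_a3 lt_in; exists (Ordinal lt_a3, Ordinal lt_in). Qed.

Lemma cart_rel_path_coord x y :
  cart_rel (path_rel 3) (path_rel n) x y = grid_adj (coord x) (coord y).
Proof. by rewrite /cart_rel /path_rel /grid_adj /= orbC. Qed.

Definition resolver : {set 'I_3 * 'I_n} := [set x | in_resolver n (coord x)].

Lemma resolver_adj_resolving : adj_resolving (cart_rel (path_rel 3) (path_rel n)) resolver.
Proof.
apply: adj_resolving_of_separating => x y; rewrite !inE => xNS yNS neq_xy.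
have neq_coord : coord x != coord y by rewrite (inj_eq coord_inj).
have [z zS sep_z] := @resolver_separates n (coord x) (coord y)
  (ltn_ord x.1) (ltn_ord x.2) (ltn_ord y.1) (ltn_ord y.2) xNS yNS neq_coord.
have [lt_z3 lt_zn] : z.1 < 3 /\ z.2 < n by move: zS; rewrite /in_resolver; lia.
have [w coord_w] := coordP lt_z3 lt_zn.
by exists w; rewrite ?inE ?cart_rel_path_coord coord_w.
Qed.

Lemma card_resolver : #|resolver| <= (if n %% 3 == 1 then n.+1 else n).
Proof.
apply: (@leq_card_in_bounded _ _ (resolver_label \o coord)) => [x y | x]; rewrite !inE.
  by move=> xS yS /(resolver_label_inj xS yS) /coord_inj.
exact: resolver_label_lt.
Qed.

End Grid.

Theorem lemma4p14 (n : nat) : 0 < n ->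
  adim (cart_rel (path_rel 3) (path_rel n)) <= (if n %% 3 == 1 then n.+1 else n).
Proof.
(* The bound holds for n = 0 as well. *)
move=> _.
exact: leq_trans (adim_le (resolver_adj_resolving n)) (card_resolver n).
Qed.
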